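(* In the setting described in the context, let $\mathcal{J},\mathcal{J}'\subseteq\mathcal{I}$ be arbitrary, and put $\mathcal{J}_\cup=\mathcal{J}\cup\mathcal{J}'$, $\mathcal{J}_\cap=\mathcal{J}\cap\mathcal{J}'$. Then $$ \operatorname{Cov}(\mathbf{c}_{\mathcal{J}},\mathbf{c}_{\mathcal{J}'}) \;=\; \sum_{\mathcal{S}\subseteq\mathcal{J}_\cup} t_{\mathcal{S}}\,(q-p)^{|\mathcal{S}|}\,p^{|\mathcal{J}_\cup|-|\mathcal{S}|}\Big(1-(q+p)^{|\mathcal{S}\cap\mathcal{J}_\cap|}\,p^{|\mathcal{J}_\cap|-|\mathcal{S}\cap\mathcal{J}_\cap|}\Big), $$ with $t_\emptyset=N$.
   Context: Setting: Let $N\ge 1$, let $\mathcal{I}$ be a finite set of column indices, and let $X\in\{0,1\}^{N\times\mathcal{I}}$ be a fixed (ground-truth) binary matrix with rows $n=1,\dots,N$. Fix probabilities $0\le p<q\le 1$. The perturbed (''evidence'') matrix $\hat{X}$ is a random matrix in $\{0,1\}^{N\times\mathcal{I}}$ whose entries are mutually independent, with $\hat X_{ni}\sim\mathrm{Bernoulli}(q)$ if $X_{ni}=1$ and $\hat X_{ni}\sim\mathrm{Bernoulli}(p)$ if $X_{ni}=0$. For $\mathcal{S}\subseteq\mathcal{I}$ define the true co-occurrence count $t_{\mathcal{S}}=\#\{n : X_{ni}=1 \text{ for all } i\in\mathcal{S}\}$ (so $t_\emptyset=N$) and the perturbed co-occurrence count $\mathbf{c}_{\mathcal{S}}=\sum_{n=1}^N\prod_{i\in\mathcal{S}}\hat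 X_{ni}$ (so $\mathbf{c}_\emptyset=N$). *)

(* Discrete finite probability space of all perturbed
   matrices Y : 'I_N * I -> bool, with the product (independent Bernoulli) law. *)
From HB Require Import structures.
From mathcomp Require Import all_boot all_order all_algebra.
Set Implicit Arguments. Unset Strict Implicit. Unset Printing Implicit Defensive.
Import Order.TTheory GRing.Theory Num.Theory.
Local Open Scope ring_scope.

Section Defs.
Variables (R : realFieldType) (N : nat) (I : finType).

Definition bmatrix := {ffun 'I_N * I -> bool}.

Definition entry_prob (p q : R) (x b : bool) : R :=
  let r := if x then q else p in if b then r else 1 - r.

Definition pert_prob (X : bmatrix) (p q : R) (Y : bmatrix) : R :=
  \prod_(ni : 'I_N * I) entry_prob p q (X ni) (Y ni).

Definition expect (X : bmatrix) (p q : R) (f : bmatrix -> R) : R :=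
  \sum_(Y : bmatrix) pert_prob X p q Y * f Y.

Definition covariance (X : bmatrix) (p q : R) (f g : bmatrix -> R) : R :=
  expect X p q (fun Y => f Y * g Y) - expect X p q f * expect X p q g.

Definition true_count (X : bmatrix) (S : {set I}) : nat :=
  #|[set n : 'I_N | [forall i in S, X (n, i)]]|.

Definition pert_count (S : {set I}) (Y : bmatrix) : R :=
  \sum_(n < N) \prod_(i in S) (Y (n, i))%:R.

End Defs.

(* The count c_J is a sum over rows n of the monomials prod_(i in J) Xhat_ni.
   Since the entries are independent, two monomials over cell sets T and T'
   have covariance prod_(T :|: T') r * (1 - prod_(T :&: T') r), r being the
   entry mean; monomials of distinct rows share no cell and are uncorrelated.
   Writing r = p + x (q - p) with x the true entry, x ^ 2 = x gives
   r ^ 2 = p ^ 2 + x (q - p) (q + p); expanding both products over the subsets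
   S of J :|: J' and summing over the rows turns prod_(i in S) x_ni into t_S. *)
From mathcomp Require Import all_boot all_algebra.
From mathcomp Require Import ring.
Set Implicit Arguments. Unset Strict Implicit. Unset Printing Implicit Defensive.
Import GRing.Theory.
Local Open Scope ring_scope.

Section ProductExpansion.
Variables (R : comPzSemiRingType) (I : finType).

Lemma prodr_natb (A : {pred I}) (f : I -> bool) :
  \prod_(i in A) ((f i)%:R : R) = ([forall i in A, f i])%:R.
Proof.
case: (boolP [forall i in A, f i]) => [/forall_inP fA | ].
  by rewrite big1 // => i /fA ->.
rewrite negb_forall_in => /exists_inP [i iA /negbTE fi].
by rewrite (bigD1 i) //= fi mul0r.
Qed.

Lemma prodr_if_in (A K : {set I}) (F : I -> R) :
  \prod_(i in A) (if i \in K then F i else 1) = \prod_(i in A :&: K) F i.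
Proof. by rewrite -big_mkcondr; apply: eq_bigl => i; rewrite in_setI. Qed.

Lemma prodr_setU_setI (A B : {set I}) (F : I -> R) :
  \prod_(i in A) F i * \prod_(i in B) F i =
  \prod_(i in A :|: B) F i * \prod_(i in A :&: B) F i.
Proof.
rewrite (big_setID (A := A :|: B) A) (big_setID (A := B) A) /=.
by rewrite setUK setDUl setDv set0U [B :&: A]setIC; ring.
Qed.

Lemma prodrDl_subset (K : {set I}) (F G : I -> R) :
  \prod_(i in K) (F i + G i) =
  \sum_(S : {set I} | S \subset K) \prod_(i in S) F i * \prod_(i in K :\: S) G i.
Proof.
pose F' i := if i \in K then F i else 0.
pose G' i := if i \in K then G i else 1.
have -> : \prod_(i in K) (F i + G i) = \prod_i (F' i + G' i).
  rewrite big_mkcond; apply: eq_bigr => i _.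
  by rewrite /F' /G'; case: (i \in K); rewrite ?add0r.
rewrite bigA_distr (bigID (fun S : {set I} => S \subset K)) /=.
rewrite [X in _ + X]big1 ?addr0.
  apply: eq_bigr => S SK; rewrite (bigID (mem S)) /=; congr (_ * _).
    by apply: eq_big => [i|i iS]; rewrite ?andbT // iS /F' (subsetP SK).
  rewrite big_mkcond [RHS]big_mkcond; apply: eq_bigr => i _.
  by rewrite in_setD /G'; case: (i \in S); case: (i \in K).
move=> S /subsetPn [i iS iK].
by rewrite (bigD1 i) //= iS /F' (negbTE iK) mul0r.
Qed.

End ProductExpansion.

Lemma row_covariance_expansion (R : comPzRingType) (I : finType)
    (a : I -> bool) (p q : R) (K L : {set I}) :
  L \subset K ->
  \prod_(i in K) (if a i then q else p)
    * (1 - \prod_(i in L) (if a i then q else p)) =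
  \sum_(S : {set I} | S \subset K)
    ([forall i in S, a i])%:R * (q - p) ^+ #|S| * p ^+ (#|K| - #|S|)
    * (1 - (q + p) ^+ #|S :&: L| * p ^+ (#|L| - #|S :&: L|)).
Proof.
move=> LK.
pose inL (x : R) i := if i \in L then x else 1.
have r_split i : (if a i then q else p) = (a i)%:R * (q - p) + p.
  by case: (a i) => /=; ring.
have r2_split i : (if a i then q else p) * inL (if a i then q else p) i =
    (a i)%:R * (q - p) * inL (q + p) i + p * inL p i.
  by rewrite /inL; case: (i \in L); case: (a i) => /=; ring.
have prodL : \prod_(i in L) (if a i then q else p) =
              \prod_(i in K) inL (if a i then q else p) i.
  by rewrite prodr_if_in (setIidPr LK).
rewrite mulrBr mulr1 prodL -big_split /=.
under eq_bigr do rewrite r_split.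
under [X in _ - X]eq_bigr do rewrite r2_split.
rewrite !prodrDl_subset -sumrB; apply: eq_bigr => S SK.
rewrite !big_split /= !prodr_if_in !prodr_const prodr_natb.
rewrite setIDAC (setIidPr LK) (cardsDS SK) cardsD [L :&: S]setIC; ring.
Qed.

Section ProductSets.
Variables (T1 T2 : finType).

Lemma setXI (A1 B1 : {set T1}) (A2 B2 : {set T2}) :
  setX A1 A2 :&: setX B1 B2 = setX (A1 :&: B1) (A2 :&: B2).
Proof. by apply/setP => [[x y]]; rewrite !inE andbACA. Qed.

Lemma setXUr (A : {set T1}) (B C : {set T2}) :
  setX A B :|: setX A C = setX A (B :|: C).
Proof. by apply/setP => [[x y]]; rewrite !inE -andb_orr. Qed.

Lemma setX0 (B : {set T2}) : setX (set0 : {set T1}) B = set0.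
Proof. by apply/setP => [[x y]]; rewrite !inE. Qed.

Lemma big_setX1 (R : Type) (idx : R) (op : Monoid.com_law idx) (x : T1)
    (A : {set T2}) (F : T1 * T2 -> R) :
  \big[op/idx]_(k in setX [set x] A) F k = \big[op/idx]_(i in A) F (x, i).
Proof.
have -> : setX [set x] A = pair x @: A.
  apply/setP => [[y i]]; rewrite in_setX in_set1.
  apply/andP/imsetP => [[/eqP -> iA] | [j jA [-> ->]]]; last by rewrite eqxx.
  by exists i.
by rewrite big_imset // => i j _ _ [].
Qed.

End ProductSets.

Section Expectation.
Variables (R : realFieldType) (N : nat) (I : finType) (X : bmatrix N I) (p q : R).
Local Notation E := (expect X p q).
Local Notation Cov := (covariance X p q).

Definition entry_mean (k : 'I_N * I) : R := if X k then q else p.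

Lemma eq_expect {f g : bmatrix N I -> R} : f =1 g -> E f = E g.
Proof. by move=> fg; apply: eq_bigr => Y _; rewrite fg. Qed.

Lemma expect_sum (T : finType) (F : T -> bmatrix N I -> R) :
  E (fun Y => \sum_t F t Y) = \sum_t E (F t).
Proof.
by rewrite /expect; under eq_bigr do rewrite mulr_sumr; exact: exchange_big.
Qed.

Lemma eq_covariance {f f' g g' : bmatrix N I -> R} :
  f =1 f' -> g =1 g' -> Cov f g = Cov f' g'.
Proof.
move=> ff' gg'; rewrite /covariance (eq_expect ff') (eq_expect gg').
by congr (_ - _); apply: eq_expect => Y; rewrite ff' gg'.
Qed.

(* The law is a product over the entries, so distributing the sum over all
   matrices through that product ([bigA_distr_bigA]) factors the expectation. *)
Lemma expect_prod_entries (T : {set 'I_N * I}) :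
  E (fun Y => \prod_(k in T) (Y k)%:R) = \prod_(k in T) entry_mean k.
Proof.
pose G k (b : bool) := entry_prob p q (X k) b * (if k \in T then b%:R else 1).
transitivity (\sum_(Y : bmatrix N I) \prod_k G k (Y k)).
  by apply: eq_bigr => Y _; rewrite /pert_prob [X in _ * X]big_mkcond -big_split.
rewrite -(bigA_distr_bigA G) [RHS]big_mkcond; apply: eq_bigr => k _.
rewrite big_bool /G /entry_prob /entry_mean.
by case: (k \in T); case: (X k) => /=; ring.
Qed.

Lemma covariance_sum (T T' : finType) (F : T -> bmatrix N I -> R)
    (G : T' -> bmatrix N I -> R) :
  Cov (fun Y => \sum_t F t Y) (fun Y => \sum_t' G t' Y) =
  \sum_t \sum_t' Cov (F t) (G t').
Proof.
have distr Y : (\sum_t F t Y) * (\sum_t' G t' Y) = \sum_t \sum_t' F t Y * G t' Y.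
  exact: big_distrlr.
rewrite /covariance (eq_expect distr) !expect_sum big_distrlr -sumrB.
by apply: eq_bigr => t _; rewrite expect_sum -sumrB.
Qed.

Lemma covariance_prod_entries (T T' : {set 'I_N * I}) :
  Cov (fun Y => \prod_(k in T) (Y k)%:R) (fun Y => \prod_(k in T') (Y k)%:R) =
  \prod_(k in T :|: T') entry_mean k * (1 - \prod_(k in T :&: T') entry_mean k).
Proof.
have prodTT' (Y : bmatrix N I) :
    \prod_(k in T) ((Y k)%:R : R) * \prod_(k in T') (Y k)%:R =
    \prod_(k in T :|: T') (Y k)%:R.
  rewrite prodr_setU_setI !prodr_natb -natrM mulnb.
  have [/forall_inP Y1 | //] := boolP [forall k in T :|: T', Y k].
  suff -> : [forall k in T :&: T', Y k] by [].
  by apply/forall_inP => k /setIP [kT _]; apply: Y1; rewrite in_setU kT.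
rewrite /covariance (eq_expect prodTT') !expect_prod_entries prodr_setU_setI.
by ring.
Qed.

Lemma pert_countE (J : {set I}) (Y : bmatrix N I) :
  pert_count R J Y = \sum_(n < N) \prod_(k in setX [set n] J) (Y k)%:R.
Proof. by apply: eq_bigr => n _; rewrite big_setX1. Qed.

(* Distinct rows share no entry, so only the diagonal terms [n = m] survive. *)
Lemma covariance_pert_count (J J' : {set I}) :
  Cov (pert_count R J) (pert_count R J') =
  \sum_(n < N) \prod_(i in J :|: J') entry_mean (n, i)
               * (1 - \prod_(i in J :&: J') entry_mean (n, i)).
Proof.
rewrite (eq_covariance (pert_countE J) (pert_countE J')) covariance_sum.
apply: eq_bigr => n _; rewrite (bigD1 n) //= big1 ?addr0 => [|m mn].
  by rewrite covariance_prod_entries setXI setIid setXUr !big_setX1.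
rewrite covariance_prod_entries setXI.
have -> : [set n] :&: [set m] = set0.
  apply/setP => k; rewrite !inE.
  by case: eqP => // ->; rewrite eq_sym (negbTE mn).
by rewrite setX0 big_set0 subrr mulr0.
Qed.

Lemma true_countE (S : {set I}) :
  (true_count X S)%:R = \sum_(n < N) ([forall i in S, X (n, i)])%:R :> R.
Proof.
rewrite /true_count -sum1_card natr_sum big_mkcond /=.
by apply: eq_bigr => n _; rewrite inE; case: [forall i in S, _].
Qed.

End Expectation.

Theorem theorem3 (R : realFieldType) (N : nat) (I : finType)
    (X : bmatrix N I) (p q : R) (J J' : {set I}) :
  (1 <= N)%N -> 0 <= p -> p < q -> q <= 1 ->
  covariance X p q (@pert_count R N I J) (@pert_count R N I J') =
  \sum_(S : {set I} | S \subset J :|: J')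
    (true_count X S)%:R * (q - p) ^+ #|S| * p ^+ (#|J :|: J'| - #|S|)
    * (1 - (q + p) ^+ #|S :&: (J :&: J')|
           * p ^+ (#|J :&: J'| - #|S :&: (J :&: J')|)).
Proof.
move=> _ _ _ _.
have JJ' : J :&: J' \subset J :|: J' by rewrite subIset // subsetUl.
rewrite covariance_pert_count.
under [RHS]eq_bigr do rewrite true_countE !mulr_suml.
rewrite exchange_big /=; apply: eq_bigr => n _; rewrite /entry_mean.
exact: row_covariance_expansion JJ'.
Qed.
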